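(* Let $G:\mathbb{N}\to\mathbb{R}$ satisfy $\lim_{k\to\infty}G(k)/k=0$ and $G(n)\ge0$ for all but finitely many $n$. Then for any $A\in\mathbb{N}$, the inequality $AG(n)-G(An)\ge0$ holds for infinitely many $n$. *)

From Stdlib Require Import Reals.

From Stdlib Require Import Reals Lra Lia Classical.
Open Scope R_scope.

(* If the inequality failed for every n >= N, then A G(n) < G(A n) there; starting from
   a point m = A n0 where G(m) > 0, iterating gives G(A^k m) >= A^k G(m), so the ratio
   G(k)/k stays >= G(m)/m > 0 along the indices A^k m, contradicting G(k)/k -> 0. *)

Lemma Un_cv_0_eventually_lt (u : nat -> R) (c : R) :
  Un_cv u 0 -> 0 < c -> exists K : nat, forall n : nat, (K <= n)%nat -> u n < c.
Proof.
  intros Hu Hc.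
  destruct (Hu c Hc) as [K HK].
  exists K; intros n Hn.
  specialize (HK n Hn); unfold R_dist in HK; rewrite Rminus_0_r in HK.
  pose proof (Rle_abs (u n)); lra.
Qed.

Lemma superlinear_along_powers (G : nat -> R) (A N m : nat) :
  (1 <= A)%nat ->
  (forall n : nat, (N <= n)%nat -> INR A * G n <= G (A * n)%nat) ->
  (N <= m)%nat ->
  forall k : nat, INR (A ^ k) * G m <= G (A ^ k * m)%nat.
Proof.
  intros HA Hsup Hm k.
  induction k as [|k IH].
  - simpl; rewrite Nat.add_0_r; lra.
  - assert (Hpow : (1 <= A ^ k)%nat) by (apply Nat.le_succ_l, Nat.neq_0_lt_0, Nat.pow_nonzero; lia).
    assert (HN : (N <= A ^ k * m)%nat) by nia.
    pose proof (Hsup _ HN) as Hstep.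
    assert (HAr : 0 <= INR A) by apply pos_INR.
    replace (A ^ S k * m)%nat with (A * (A ^ k * m))%nat by (simpl; lia).
    rewrite Nat.pow_succ_r', mult_INR, Rmult_assoc.
    apply Rle_trans with (INR A * G (A ^ k * m)%nat); [|exact Hstep].
    apply Rmult_le_compat_l; assumption.
Qed.

Lemma ratio_ge_of_scaled_ge (G : nat -> R) (p m : nat) :
  (1 <= p)%nat -> (1 <= m)%nat -> INR p * G m <= G (p * m)%nat ->
  G m / INR m <= G (p * m)%nat / INR (p * m).
Proof.
  intros Hp Hm Hle.
  assert (Hpr : 0 < INR p) by (apply lt_0_INR; lia).
  assert (Hmr : 0 < INR m) by (apply lt_0_INR; lia).
  rewrite mult_INR.
  replace (G m / INR m) with (INR p * G m / (INR p * INR m)) by (field; lra).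
  apply Rmult_le_compat_r; [|exact Hle].
  left; apply Rinv_0_lt_compat, Rmult_lt_0_compat; assumption.
Qed.

Theorem lemma1 (G : nat -> R)
  (Hlim : Un_cv (fun k => G k / INR k) 0)
  (Hpos : exists N0 : nat, forall n : nat, (N0 <= n)%nat -> 0 <= G n)
  (A : nat) (HA : (1 <= A)%nat) :
  forall N : nat, exists n : nat, (N <= n)%nat /\ INR A * G n - G (A * n)%nat >= 0.
Proof.
  intros N.
  destruct (Nat.eq_dec A 1) as [->|HA1].
  { exists N; split; [lia|]. rewrite Nat.mul_1_l; simpl; lra. }
  apply NNPP; intro Hnone.
  assert (Hsup : forall n, (N <= n)%nat -> INR A * G n < G (A * n)%nat).
  { intros n Hn. apply Rnot_ge_lt; intro Hge. apply Hnone; exists n; split; [exact Hn | lra]. }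
  destruct Hpos as [N0 HN0].
  set (n0 := Nat.max N (Nat.max N0 1)).
  set (m := (A * n0)%nat).
  assert (Hm : (1 <= m)%nat /\ (N <= m)%nat) by (unfold m, n0; nia).
  assert (HGm : 0 < G m).
  { assert (HAr : 1 < INR A) by (apply (lt_INR 1); lia).
    pose proof (Hsup n0 ltac:(unfold n0; lia)).
    pose proof (HN0 n0 ltac:(unfold n0; lia)).
    unfold m; nra. }
  destruct (Un_cv_0_eventually_lt _ (G m / INR m) Hlim) as [K HK].
  { apply Rdiv_lt_0_compat; [exact HGm | apply lt_0_INR; lia]. }
  assert (HKpow : (K < A ^ K)%nat) by (apply Nat.pow_gt_lin_r; lia).
  assert (Hratio : G m / INR m <= G (A ^ K * m)%nat / INR (A ^ K * m)).
  { apply ratio_ge_of_scaled_ge; [lia | lia |].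
    apply (superlinear_along_powers G A N); [exact HA | | apply Hm].
    intros n Hn; left; exact (Hsup n Hn). }
  specialize (HK (A ^ K * m)%nat ltac:(nia)).
  lra.
Qed.
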